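(* Let $\{P_n\}_{n\ge0}$ and $\{Q_n\}_{n\ge0}$ be Brenke polynomial sets generated by $$A_1(t)B_1(xt)=\sum_{n\ge0}\frac{P_n(x)}{n!}t^n,\qquad A_2(t)B_2(xt)=\sum_{n\ge0}\frac{Q_n(x)}{n!}t^n,$$ with $A_i(t)=\sum_k a^{(i)}_kt^k$, $B_i(t)=\sum_kb^{(i)}_kt^k$, $a^{(i)}_0\neq0$ and $b^{(i)}_k\ne0$ for all $k$. Let $\theta$ be the transfer operator from $B_1$ to $B_2$, acting termwise on formal power series in $t$ by $\theta(t^n)=\frac{b^{(2)}_n}{b^{(1)}_n}t^n$. Define the connection coefficients $C_m(n)$ by $Q_n(x)=\sum_{m=0}^nC_m(n)P_m(x)$. Then for every $m\ge0$, $$A_2(t)\,\theta\!\left(\frac{t^m}{A_1(t)}\right)=\sum_{n\ge m}\frac{m!}{n!}C_m(n)\,t^n$$ as formal power series in $t$.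
   Context: A polynomial set (PS) is a sequence $\{P_n\}_{n\ge0}$ of complex polynomials with $\deg P_n=n$. A Brenke PS is a PS generated (as formal power series in $t$) by $A(t)B(xt)=\sum_{n\ge0}P_n(x)t^n/n!$ with $A(t)=\sum_ka_kt^k$, $B(t)=\sum_kb_kt^k$, $a_0\neq0$, $b_k\ne0$ for all $k$. *)

(* Formal power series over a field C are represented as
   coefficient sequences  nat -> C  (f n = coefficient of t^n). *)
From HB Require Import structures.
From mathcomp Require Import all_boot all_order all_algebra.
Set Implicit Arguments. Unset Strict Implicit. Unset Printing Implicit Defensive.
Import Order.TTheory GRing.Theory Num.Theory.
Local Open Scope ring_scope.

Section FPS.
Variable C : fieldType.

Definition fps_mul (f g : nat -> C) : nat -> C :=
  fun n => \sum_(k < n.+1) f k * g (n - k)%N.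

Definition fps_shift (m : nat) (f : nat -> C) : nat -> C :=
  fun n => if (m <= n)%N then f (n - m)%N else 0.

Fixpoint fps_inv_upto (f : nat -> C) (n : nat) : seq C :=
  match n with
  | 0 => [:: (f 0%N)^-1]
  | n'.+1 =>
      let s := fps_inv_upto f n' in
      rcons s (- (f 0%N)^-1 *
               \sum_(1 <= k < n'.+2) f k * nth 0 s (n'.+1 - k)%N)
  end.

Definition fps_inv (f : nat -> C) : nat -> C :=
  fun n => nth 0 (fps_inv_upto f n) n.

Definition transfer (b1 b2 : nat -> C) (f : nat -> C) : nat -> C :=
  fun n => b2 n / b1 n * f n.

Definition brenke_pair (a b : nat -> C) : Prop :=
  a 0%N != 0 /\ forall k, b k != 0.

(* P is generated by A(t)B(xt) = sum_n P_n(x) t^n / n!, i.e. comparing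
   coefficients of t^n:  P_n(x) = n! * sum_{k=0}^n a_{n-k} b_k x^k *)
Definition brenke_generated (a b : nat -> C) (P : nat -> {poly C}) : Prop :=
  forall n, P n = (n`!)%:R *: \sum_(k < n.+1) (a (n - k)%N * b k) *: 'X^k.

End FPS.

(* Comparing the coefficients of x^(n-k) in Q_n = sum_i C_i(n) P_i gives
   a2_k b2_(n-k) / b1_(n-k) = (e * A1)_k for k <= n, where
   e_i = (n-i)! C_(n-i)(n) / n!.  The n-th coefficient of A2 theta(t^m / A1)
   is the (n-m)-th coefficient of the series k |-> a2_k b2_(n-k) / b1_(n-k)
   times 1/A1, hence that of e * A1 * (1/A1) = e, namely e_(n-m). *)
From HB Require Import structures.
From mathcomp Require Import all_boot all_order all_algebra.
From mathcomp Require Import zify ring.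
Set Implicit Arguments. Unset Strict Implicit. Unset Printing Implicit Defensive.
Import Order.TTheory GRing.Theory Num.Theory.
Local Open Scope ring_scope.

Section FormalPowerSeries.
Variable C : fieldType.
Implicit Types f g h : nat -> C.

Definition fps_one : nat -> C := fun n => (n == 0)%:R.

Lemma eq_fps_mul f f' g g' n :
    (forall k, (k <= n)%N -> f k = f' k) ->
    (forall k, (k <= n)%N -> g k = g' k) ->
  fps_mul f g n = fps_mul f' g' n.
Proof.
move=> eq_f eq_g; apply: eq_bigr => k _.
have le_kn : (k <= n)%N by rewrite -ltnS.
by rewrite eq_f // eq_g // leq_subr.
Qed.

Lemma fps_mulr1 f n : fps_mul f fps_one n = f n.
Proof.
rewrite /fps_mul big_ord_recr /= subnn mulr1 big1 ?add0r // => k _.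
by rewrite /fps_one subn_eq0 leqNgt ltn_ord mulr0.
Qed.

Lemma fps_mul_shift f g m n :
  fps_mul f (fps_shift m g) n = if (m <= n)%N then fps_mul f g (n - m) else 0.
Proof.
rewrite /fps_mul /fps_shift; case: leqP => [le_mn | lt_nm]; last first.
  by rewrite big1 // => k _; rewrite ifF ?mulr0 //; lia.
rewrite (big_ord_widen n.+1 (fun k => f k * g (n - m - k)%N)); last lia.
rewrite [RHS]big_mkcond /=; apply: eq_bigr => k _.
have := ltn_ord k; case: ifP => [le_kmn | gt_kmn] lt_kn.
  by rewrite ifT; [congr (_ * g _); lia | lia].
by rewrite ifF ?mulr0 //; lia.
Qed.

Lemma fps_mul_transfer b1 b2 f g n :
  fps_mul f (transfer b1 b2 g) n
  = fps_mul (fun k => f k * (b2 (n - k)%N / b1 (n - k)%N)) g n.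
Proof. by apply: eq_bigr => k _; rewrite /transfer mulrA. Qed.

Definition fps_trunc (N : nat) f : {poly C} := \poly_(i < N) f i.

Lemma fps_mul_trunc N f g i :
  (i < N)%N -> fps_mul f g i = (fps_trunc N f * fps_trunc N g)`_i.
Proof.
move=> lt_iN; rewrite coefM; apply: eq_bigr => j _.
by rewrite !coef_poly !ifT //; have := ltn_ord j; lia.
Qed.

Lemma fps_mulA f g h n : fps_mul (fps_mul f g) h n = fps_mul f (fps_mul g h) n.
Proof.
pose t u := fps_trunc n.+1 u.
transitivity (((t f * t g) * t h)`_n).
  rewrite coefM; apply: eq_bigr => j _; have := ltn_ord j => lt_jn.
  by rewrite (fps_mul_trunc (N := n.+1)) // coef_poly ifT //; lia.
rewrite -mulrA coefM; apply: eq_bigr => j _; have := ltn_ord j => lt_jn.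
by rewrite (fps_mul_trunc (N := n.+1) g h) ?coef_poly ?ifT //; lia.
Qed.

Lemma size_fps_inv_upto f n : size (fps_inv_upto f n) = n.+1.
Proof. by elim: n => [|n IHn] //=; rewrite size_rcons IHn. Qed.

Lemma nth_fps_inv_upto f n i :
  (i <= n)%N -> nth 0 (fps_inv_upto f n) i = fps_inv f i.
Proof.
elim: n => [|n IHn] le_in; first by move: le_in; rewrite leqn0 => /eqP ->.
case: (ltngtP i n.+1) le_in => // [lt_in _ | -> _]; last by [].
by rewrite /= nth_rcons size_fps_inv_upto lt_in IHn.
Qed.

Lemma fps_invS f n :
  fps_inv f n.+1 = - (f 0%N)^-1 * \sum_(1 <= k < n.+2) f k * fps_inv f (n.+1 - k).
Proof.
rewrite /fps_inv /= nth_rcons size_fps_inv_upto ltnn eqxx.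
congr (_ * _); apply: eq_big_nat => k /andP[ge1_k lt_kn].
by rewrite nth_fps_inv_upto //; lia.
Qed.

Lemma fps_mul_inv f n : f 0%N != 0 -> fps_mul f (fps_inv f) n = fps_one n.
Proof.
move=> f0_neq0; rewrite /fps_mul /fps_one; case: n => [|n].
  by rewrite big_ord1 subnn /fps_inv /= mulfV.
rewrite big_ord_recl subn0 fps_invS mulrA mulrN mulfV // mulN1r.
rewrite big_add1 /= big_mkord addrC; apply/eqP; rewrite subr_eq0; apply/eqP.
by apply: eq_bigr => i _; rewrite /bump add1n.
Qed.

End FormalPowerSeries.

Section BrenkeCoefficients.
Variables (C : fieldType) (a b : nat -> C) (P : nat -> {poly C}).
Hypothesis hP : brenke_generated a b P.

Lemma coef_brenke n j :
  (P n)`_j = (n`!)%:R * (if (j <= n)%N then a (n - j)%N * b j else 0).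
Proof.
by rewrite hP coefZ -(poly_def _ (fun k => a (n - k) * b k)) coef_poly ltnS.
Qed.

Lemma coef_brenke_comb (c : nat -> C) n k : (k <= n)%N ->
  (\sum_(i < n.+1) c i *: P i)`_(n - k)
  = b (n - k) * fps_mul (fun i => c (n - i)%N * ((n - i)`!)%:R) a k.
Proof.
move=> le_kn; rewrite coef_sum.
rewrite -(big_mkord xpredT (fun i => (c i *: P i)`_(n - k))) big_rev_mkord subn0.
rewrite /fps_mul (big_ord_widen n.+1
  (fun i => c (n - i)%N * ((n - i)`!)%:R * a (k - i)%N)) ?ltnS //.
rewrite mulr_sumr [RHS]big_mkcond /=.
apply: eq_bigr => i _; have := ltn_ord i => lt_in.
rewrite coefZ coef_brenke subSS; case: ifP => [le_ik | gt_ik].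
  by rewrite ifT; [rewrite (_ : (n - i - (n - k) = k - i)%N); [ring | lia] | lia].
by rewrite ifF ?mulr0 //; lia.
Qed.

End BrenkeCoefficients.

Lemma brenke_connection_conv (C : numFieldType) (a1 b1 a2 b2 : nat -> C)
    (P Q : nat -> {poly C}) (c : nat -> C) n k :
    (forall j, b1 j != 0) ->
    brenke_generated a1 b1 P -> brenke_generated a2 b2 Q ->
    Q n = \sum_(i < n.+1) c i *: P i -> (k <= n)%N ->
  a2 k * (b2 (n - k)%N / b1 (n - k)%N)
  = fps_mul (fun i => c (n - i)%N * ((n - i)`!)%:R / (n`!)%:R) a1 k.
Proof.
move=> b1_neq0 hP hQ hQP le_kn.
have fact_neq0 : (n`!)%:R != 0 :> C by rewrite pnatr_eq0 -lt0n fact_gt0.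
have := congr1 (fun p : {poly C} => p`_(n - k)%N) hQP.
rewrite /= (coef_brenke_comb hP) // (coef_brenke hQ) leq_subr subKn // => coef_eq.
set F := fps_mul _ a1 k in coef_eq.
have -> : fps_mul (fun i => c (n - i)%N * ((n - i)`!)%:R / (n`!)%:R) a1 k
          = F / (n`!)%:R.
  by rewrite /F /fps_mul mulr_suml; apply: eq_bigr => i _; rewrite mulrAC.
rewrite -[F](mulKf (b1_neq0 (n - k)%N)) -coef_eq.
by field; rewrite fact_neq0 b1_neq0.
Qed.

Theorem mainTheorem5 (C : numClosedFieldType)
  (a1 b1 a2 b2 : nat -> C) (P Q : nat -> {poly C})
  (hAB1 : brenke_pair a1 b1) (hAB2 : brenke_pair a2 b2)
  (hP : brenke_generated a1 b1 P) (hQ : brenke_generated a2 b2 Q)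
  (Cc : nat -> nat -> C)
  (hC : forall n, Q n = \sum_(m < n.+1) Cc m n *: P m) :
  forall m n : nat,
    fps_mul a2 (transfer b1 b2 (fps_shift m (fps_inv a1))) n
    = if (m <= n)%N then (m`!)%:R / (n`!)%:R * Cc m n else 0.
Proof.
move=> m n; have [a1_0 b1_neq0] := hAB1.
pose e i := Cc (n - i)%N n * ((n - i)`!)%:R / (n`!)%:R.
rewrite fps_mul_transfer fps_mul_shift; case: leqP => // le_mn.
rewrite (eq_fps_mul (f' := fps_mul e a1) (g' := fps_inv a1)) // => [|k le_k]; last first.
  by apply: (brenke_connection_conv (c := Cc^~ n) b1_neq0 hP hQ (hC n)); lia.
rewrite fps_mulA (eq_fps_mul (f' := e) (g' := fps_one C)) // ?fps_mulr1 => [|k _].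
  by rewrite /e subKn // -mulrA mulrC.
exact: fps_mul_inv.
Qed.
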